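(* Let $G$ be a finite group with $|G|\ge3$, let $k,\ell\in\mathbb N$ with $k<\ell$, and let $U_1,\ldots,U_k,V_1,\ldots,V_\ell\in\mathcal A(G)$ with $U_1\boldsymbol{\cdot}\ldots\boldsymbol{\cdot}U_k=V_1\boldsymbol{\cdot}\ldots\boldsymbol{\cdot}V_\ell$. Then there exist $\mu\in[1,k]$, $\lambda,\lambda'\in[1,\ell]$ with $\lambda\ne\lambda'$, and $g_1,g_2\in G$ such that $U_\mu=g_1\boldsymbol{\cdot}g_2\boldsymbol{\cdot}\ldots\boldsymbol{\cdot}g_m$ with $m\ge2$ and $g_1g_2\cdots g_m=1_G$, and $g_1\mid V_\lambda$ and $g_2\mid V_{\lambda'}$ in $\mathcal F(G)$.
   Context: Let $G$ be a finite group written multiplicatively with identity $1_G$. $\mathcal F(G)$ is the free abelian monoid with basis $G$; its elements are sequences $S=g_1\boldsymbol{\cdot}\ldots\boldsymbol{\cdot}g_\ell$ (unordered, repetitions allowed, operation $\boldsymbol{\cdot}$ = concatenation). $\pi(S)=\{g_{\tau(1)}\cdots g_{\tau(\ell)}:\tau\text{ a permutation of }[1,\ell]\}$, $\mathcal B(G)=\{S\in\mathcal F(G):1_G\in\pi(S)\}$, and $\mathcal A(G)$ is the set of atoms (irreducible elements) of the monoid $\mathcal B(G)$. *)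

(* Sequences over G (elements of F(G)) are represented by
   lists `seq gT`, considered up to permutation (perm_eq). *)
From mathcomp Require Import all_boot all_fingroup.
Set Implicit Arguments. Unset Strict Implicit. Unset Printing Implicit Defensive.

Local Open Scope group_scope.

Definition seq_prod (gT : finGroupType) (s : seq gT) : gT := \prod_(g <- s) g.

Definition pi_set (gT : finGroupType) (S : seq gT) (g : gT) : Prop :=
  exists t : seq gT, perm_eq t S /\ seq_prod t = g.

Definition in_B (gT : finGroupType) (S : seq gT) : Prop := pi_set S 1.

(* atoms of the monoid B(G): non-units (the only unit is the empty sequence)
   that admit no factorisation S = T . T' into two non-units of B(G) *)
Definition is_atom (gT : finGroupType) (S : seq gT) : Prop :=
  [/\ in_B S, S <> [::] &
      forall T T' : seq gT, perm_eq S (T ++ T') -> in_B T -> in_B T' ->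
        T = [::] \/ T' = [::]].

(* Read an atom [U_mu] along a zero-sum ordering as a cycle.  If two
   cyclically consecutive elements lie in distinct [V]'s, rotating the cycle
   makes them its first two elements without changing the product [1].
   Otherwise all elements of [U_mu] lie in one [V_lam] and in no other.  An
   atom containing [1] is [[:: 1]], and both factorisations contain equally
   many [1]'s, so fewer of the [U]'s than of the [V]'s differ from [[:: 1]].
   Hence sending each such [V_lam] to an atom [U_mu] containing one of its
   elements is not injective, and two distinct [V]'s meeting the same [U_mu]
   rule out the second alternative for that atom. *)
From mathcomp Require Import all_boot all_fingroup.

Set Implicit Arguments. Unset Strict Implicit. Unset Printing Implicit Defensive.

Definition cyc_adjacent (T : Type) (t : seq T) (a b : T) : Prop :=
  exists n rest, rot n t = [:: a, b & rest].

Section CyclicAdjacency.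

Variable T : eqType.
Implicit Types (t : seq T) (a b x : T).

Lemma mem_cyc_adjacent t a b : cyc_adjacent t a b -> a \in t /\ b \in t.
Proof.
case=> n [rest rot_t]; have mem_t := mem_rot n t; rewrite rot_t in mem_t.
by rewrite -!mem_t !inE !eqxx orbT.
Qed.

Lemma cyc_adjacent_succ t x : 1 < size t -> x \in t -> exists y, cyc_adjacent t x y.
Proof.
move=> t_gt1 /rot_to[n [|y rest] rot_t]; last by exists y, n, rest.
by move: t_gt1; rewrite -(size_rot n) rot_t.
Qed.

Lemma cyc_adjacent_neq (I : eqType) (f : T -> I) t x x' :
  x \in t -> x' \in t -> f x != f x' -> exists a b, cyc_adjacent t a b /\ f a != f b.
Proof.
move=> xt x't fxx'.
have [t1 [a [b [t2 [-> fab]]]]] :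
    exists t1 a b t2, t = t1 ++ [:: a, b & t2] /\ f a != f b.
  elim: t x x' xt x't fxx' => [|a [|b t] IH] x x' //.
    by rewrite !inE => /eqP-> /eqP->; rewrite eqxx.
  have [fab|fab] := eqVneq (f a) (f b); last by exists [::], a, b, t.
  have shift z : z \in [:: a, b & t] -> exists2 z', z' \in b :: t & f z' = f z.
    by rewrite inE => /predU1P[->|zt]; [exists b; rewrite ?mem_head ?fab | exists z].
  move=> /shift[y yt <-] /shift[y' y't <-] /(IH _ _ yt y't)[t1 [c [d [t2 [-> fcd]]]]].
  by exists (a :: t1), c, d, t2.
by exists a, b; split=> //; exists (size t1), (t2 ++ t1); rewrite rot_size_cat.
Qed.

Lemma cyc_adjacent_labels (I : eqType) (lab : T -> pred I) (f : T -> I) t x x' p p' :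
    1 < size t -> {in t, forall y, lab y (f y)} ->
    x \in t -> x' \in t -> lab x p -> lab x' p' -> p != p' ->
  exists a b q q', [/\ cyc_adjacent t a b, lab a q, lab b q' & q != q'].
Proof.
move=> t_gt1 lab_f xt x't lab_x lab_x' pp'.
have [/allP f_const | /allPn[y yt fyx]] := boolP (all (fun y => f y == f x) t).
  have from_succ z q : z \in t -> lab z q -> q != f x -> exists a b q q',
      [/\ cyc_adjacent t a b, lab a q, lab b q' & q != q'].
    move=> zt lab_z qfx; have [y adj] := cyc_adjacent_succ t_gt1 zt.
    have yt := (mem_cyc_adjacent adj).2.
    by exists z, y, q, (f y); rewrite lab_f // (eqP (f_const y yt)).
  have [pfx|] := eqVneq p (f x); last exact: from_succ xt lab_x.
  by apply: (from_succ x' p') => //; rewrite -pfx eq_sym.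
have [a [b [adj fab]]] := cyc_adjacent_neq yt xt fyx.
have [a_t b_t] := mem_cyc_adjacent adj.
by exists a, b, (f a), (f b); rewrite !lab_f.
Qed.

End CyclicAdjacency.

Lemma pigeonhole_in (T T' : eqType) (f : T -> T') (s : seq T) (r : seq T') :
    uniq s -> {subset map f s <= r} -> size r < size s ->
  exists i j, [/\ i \in s, j \in s, i != j & f i = f j].
Proof.
case: s => [|x0 s] // s_uniq fs_r lt_r_s.
have /(uniqPn (f x0))[i [j [lt_ij lt_j fij]]] : ~~ uniq (map f (x0 :: s)).
  by apply: contraL lt_r_s => /uniq_leq_size/(_ fs_r); rewrite size_map -leqNgt.
rewrite size_map in lt_j; have lt_i := ltn_trans lt_ij lt_j.
exists (nth x0 (x0 :: s) i), (nth x0 (x0 :: s) j).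
by rewrite !mem_nth // nth_uniq // ltn_eqF // -!(nth_map x0 (f x0)).
Qed.

Local Open Scope group_scope.

Section ZeroSumSequences.

Variable gT : finGroupType.
Implicit Types (s t S : seq gT) (L : seq (seq gT)).

Lemma seq_prod_cat s t : seq_prod (s ++ t) = seq_prod s * seq_prod t.
Proof. exact: big_cat. Qed.

Lemma seq_prod_rot_eq1 n t : seq_prod t = 1 -> seq_prod (rot n t) = 1.
Proof.
rewrite -{1}(cat_take_drop n t) /rot !seq_prod_cat => /eqP.
by rewrite -eq_invg_mul => /eqP <-; rewrite mulVg.
Qed.

Lemma zero_sum_size_gt1 t x : seq_prod t = 1 -> x \in t -> x != 1 -> 1 < size t.
Proof.
case: t => [|y [|z t]] //; rewrite inE => + /eqP->.
by rewrite /seq_prod big_seq1 => ->; rewrite eqxx.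
Qed.

Lemma in_BP S : in_B S <-> exists2 t, perm_eq t S & seq_prod t = 1.
Proof. by split=> [[t []]|[t]]; exists t. Qed.

Lemma atom_mem1 S : is_atom S -> 1 \in S -> S = [:: 1].
Proof.
case=> /in_BP[t tS t1] _ S_irr S1.
have {}tS : perm_eq t (1 :: rem 1 S) by rewrite (perm_trans tS) ?perm_to_rem.
have /perm_consP[n [t' [rot_t t'S]]] := tS.
have B_rem : in_B (rem 1 S).
  apply/in_BP; exists t' => //.
  by move/(seq_prod_rot_eq1 n): t1; rewrite rot_t /seq_prod big_cons mul1g.
have B_1 : in_B [:: 1 : gT] by apply/in_BP; exists [:: 1]; rewrite /seq_prod ?big_seq1.
case: (S_irr [:: 1] _ (perm_to_rem S1) B_1 B_rem) => // rem_nil.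
by apply: perm_small_eq; rewrite // -rem_nil perm_to_rem.
Qed.

Lemma count1_atom S : is_atom S -> count_mem 1 S = (S == [:: 1]).
Proof.
move=> S_atom; have [S1|S1] := boolP (1 \in S).
  by rewrite (atom_mem1 S_atom S1) /= !eqxx addn0.
have -> : count_mem 1 S = 0 by apply/count_memPn.
by case: eqP S1 => // ->; rewrite mem_head.
Qed.

Lemma count1_flatten_atoms L :
  {in L, forall S, is_atom S} -> count_mem 1 (flatten L) = count_mem [:: 1] L.
Proof.
move=> L_atoms; rewrite count_flatten -sumn_count; congr sumn.
by apply/eq_in_map => S /L_atoms/count1_atom.
Qed.

Lemma head_nontrivial_atom S :
  is_atom S -> S != [:: 1] -> head 1 S \in S /\ head 1 S != 1.
Proof.
move=> S_atom S1; have [_ S0 _] := S_atom.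
have hS : head 1 S \in S by case: S S0 {S_atom S1} => // x S _; apply: mem_head.
split=> //; apply: contra S1 => /eqP h1.
by rewrite (atom_mem1 S_atom) // -h1.
Qed.

Definition nontrivial_indices L : seq nat :=
  [seq i <- iota 0 (size L) | nth [::] L i != [:: 1]].

Lemma mem_nontrivial_indices L i :
  (i \in nontrivial_indices L) = (i < size L) && (nth [::] L i != [:: 1]).
Proof. by rewrite mem_filter mem_iota andbC. Qed.

Lemma size_nontrivial_indices L :
  size (nontrivial_indices L) = size L - count_mem [:: 1] L.
Proof.
rewrite -(count_predC (pred1 [:: 1 : gT]) L) addKn size_filter.
by rewrite -{3}(mkseq_nth [::] L) count_map.
Qed.

End ZeroSumSequences.

Section Blocks.

Variables (gT : finGroupType) (Vs : seq (seq gT)).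

Definition in_block (y : gT) (p : nat) : bool := (p < size Vs) && (y \in nth [::] Vs p).

Definition first_block (y : gT) : nat := find (fun V => y \in V) Vs.

Lemma in_first_block y : y \in flatten Vs -> in_block y (first_block y).
Proof.
case/flattenP=> V VVs yV; have hasV : has (fun V => y \in V) Vs by apply/hasP; exists V.
by rewrite /in_block -has_find hasV (nth_find [::] hasV).
Qed.

Lemma flatten_in_block y p : in_block y p -> y \in flatten Vs.
Proof. by case/andP=> pV yV; apply/flattenP; exists (nth [::] Vs p); rewrite ?mem_nth. Qed.

Lemma zero_sum_split U x x' p p' :
    in_B U -> {subset U <= flatten Vs} -> x \in U -> x' \in U -> x != 1 ->
    in_block x p -> in_block x' p' -> p != p' ->
  exists (lam lam' : nat) (g1 g2 : gT) (rest : seq gT),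
    [/\ lam < size Vs, lam' < size Vs & lam <> lam'] /\
    perm_eq U [:: g1, g2 & rest] /\ seq_prod [:: g1, g2 & rest] = 1 /\
    g1 \in nth [::] Vs lam /\ g2 \in nth [::] Vs lam'.
Proof.
move=> /in_BP[t tU t1] UVs xU x'U x1 bl_x bl_x' pp'.
have t_gt1 : 1 < size t by apply: zero_sum_size_gt1 t1 _ x1; rewrite (perm_mem tU).
have bl_first : {in t, forall y, in_block y (first_block y)}.
  by move=> y; rewrite (perm_mem tU) => /UVs/in_first_block.
rewrite -!(perm_mem tU) in xU x'U.
have [a [b [q [q' [[n [rest rot_t]] /andP[q_lt aq] /andP[q'_lt bq'] qq']]]]] :=
  cyc_adjacent_labels t_gt1 bl_first xU x'U bl_x bl_x' pp'.
exists q, q', a, b, rest; split; first by split=> //; apply/eqP.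
by rewrite -rot_t perm_sym perm_rot tU seq_prod_rot_eq1.
Qed.

End Blocks.

Section TwoFactorisations.

Variables (gT : finGroupType) (Us Vs : seq (seq gT)).
Hypotheses (Us_atoms : {in Us, forall U, is_atom U}) (Vs_atoms : {in Vs, forall V, is_atom V}).
Hypothesis UV : perm_eq (flatten Us) (flatten Vs).

Definition host_atom (i : nat) : nat := first_block Us (head 1 (nth [::] Vs i)).

Lemma nontrivial_head i : i \in nontrivial_indices Vs ->
  let x := head 1 (nth [::] Vs i) in
  [/\ in_block Vs x i, x != 1 & in_block Us x (host_atom i)].
Proof.
rewrite mem_nontrivial_indices => /andP[iV nontriv] x.
have [xV x1] := head_nontrivial_atom (Vs_atoms (mem_nth [::] iV)) nontriv.
have bl_V : in_block Vs x i by rewrite /in_block iV.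
split=> //; apply/in_first_block; rewrite (perm_mem UV); exact: flatten_in_block bl_V.
Qed.

Lemma size_nontrivial_indices_lt :
  size Us < size Vs -> size (nontrivial_indices Us) < size (nontrivial_indices Vs).
Proof.
move=> ltUV; rewrite !size_nontrivial_indices -!count1_flatten_atoms // -(seq.permP UV).
apply: ltn_sub2r (ltUV); apply: leq_ltn_trans (ltUV).
by rewrite count1_flatten_atoms ?count_size.
Qed.

Lemma host_atom_not_injective : size Us < size Vs ->
  exists i i', [/\ i \in nontrivial_indices Vs, i' \in nontrivial_indices Vs,
                   i != i' & host_atom i = host_atom i'].
Proof.
move=> ltUV; apply: (pigeonhole_in (r := nontrivial_indices Us)).
- by rewrite filter_uniq ?iota_uniq.
- move=> _ /mapP[i iV ->]; have [_ x1 /andP[hostU xU]] := nontrivial_head iV.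
  by rewrite mem_nontrivial_indices hostU; apply: contra x1 => /eqP U1; rewrite U1 inE in xU.
- exact: size_nontrivial_indices_lt.
Qed.

End TwoFactorisations.

Theorem lemma5p1 (gT : finGroupType) (Us Vs : seq (seq gT)) :
  3 <= #|[set: gT]| ->
  size Us < size Vs ->
  (forall U, U \in Us -> is_atom U) ->
  (forall V, V \in Vs -> is_atom V) ->
  perm_eq (flatten Us) (flatten Vs) ->
  exists (mu lam lam' : nat) (g1 g2 : gT) (rest : seq gT),
    [/\ mu < size Us, lam < size Vs, lam' < size Vs & lam <> lam'] /\
    perm_eq (nth [::] Us mu) [:: g1, g2 & rest] /\
    seq_prod [:: g1, g2 & rest] = 1%g /\
    g1 \in nth [::] Vs lam /\ g2 \in nth [::] Vs lam'.
Proof.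
move=> _ ltUV Us_atoms Vs_atoms UV.
have [i [i' [iV i'V ii' host_ii']]] := host_atom_not_injective Us_atoms Vs_atoms UV ltUV.
have [bl_i x1 /andP[hostU xU]] := nontrivial_head Vs_atoms UV iV.
have [bl_i' _ /andP[_ x'U]] := nontrivial_head Vs_atoms UV i'V.
rewrite -host_ii' in x'U; set mu := host_atom Us Vs i in hostU xU x'U.
have [U_B _ _] := Us_atoms _ (mem_nth [::] hostU).
have U_Vs : {subset nth [::] Us mu <= flatten Vs}.
  move=> y yU; rewrite -(perm_mem UV); apply: (flatten_in_block (p := mu)).
  by rewrite /in_block hostU.
have [lam [lam' [g1 [g2 [rest [[lamV lam'V neq] split_U]]]]]] :=
  zero_sum_split U_B U_Vs xU x'U x1 bl_i bl_i' ii'.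
by exists mu, lam, lam', g1, g2, rest.
Qed.
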